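(* Let $\mathcal{M}$ be a CTMC with $E(s)=1$ for all states $s$ and a unique absorbing goal state $g$; let $\delta>0$, $c=e^{\delta}$, $\mathcal{M}'=c\cdot\mathcal{M}$, $t\geq0$, and $N=\left\lceil\frac{(e^{\delta}-1)t}{\delta}\right\rceil$. Then $$\mathrm{Diff}_t(\mathcal{M}):=\left|\mathrm{Pr}^{\mathcal{M}'}(\lozenge^{\leq t}g)-\mathrm{Pr}^{\mathcal{M}}(\lozenge^{\leq t}g)\right|\leq\mathrm{Diff}_t(\mathcal{E}_N)=\sum_{k=0}^{N-1}\frac{t^k}{k!}\left(e^{-t}-c^ke^{-ct}\right).$$
   Context: In a CTMC the process stays in state $s$ an exponentially distributed time with rate $E(s)$ and then jumps to $s'$ with probability $P(s,s')$. $c\cdot\mathcal{M}$ is obtained by multiplying all exit rates by $c$. $\mathrm{Pr}^{\mathcal{M}}(\lozenge^{\leq t}g)$: probability of reaching $g$ from the initial state within time $t$. The Erlang CTMC $\mathcal{E}_N$ has states $s_0,\dots,s_{N-1},s_N=g$, initial state $s_0$ (only $g$ if $N=0$), all exit rates $1$, $P(s_i,s_{i+1})=1$ for $i<N$, $P(g,g)=1$, with $g$ labeled differently from the equally labeled $s_0,\dots,s_{N-1}$; $\mathrm{Diff}_t(\mathcal{E}_N)=|\mathrm{Pr}^{\mathcal{E}_N}(\lozenge^{\leq t}g)-\mathrm{Pr}^{c\cdot\mathcal{E}_N}(\lozenge^{\leq t}g)|$. *)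

From HB Require Import structures.
From mathcomp Require Import all_boot all_order all_algebra.
From mathcomp Require Import all_classical all_reals all_analysis.
Set Implicit Arguments. Unset Strict Implicit. Unset Printing Implicit Defensive.
Import Order.TTheory GRing.Theory Num.Theory.
Import numFieldNormedType.Exports.
Local Open Scope classical_set_scope.
Local Open Scope ring_scope.

(* A CTMC over a finite state space S is given by exit rates E : S -> R,
   a (stochastic) jump matrix P : S -> S -> R and an initial state s0. *)

(* reach_within E P G n s t = probability, starting in s, of reaching the
   goal set G within time t using at most n jumps.  This is the n-th Kleene
   iterate (from 0) of the standard Volterra integral characterization of
   time-bounded reachability in CTMCs (Baier-Haverkort-Hermanns-Katoen):
     Pr(s, <>^{<=t} G) = 1                                     if s in G
                       = int_0^t E(s) e^{-E(s)x} sum_s' P(s,s') Pr(s', <>^{<=t-x} G) dx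
                                                                otherwise. *)
Fixpoint reach_within (R : realType) (S : finType) (E : S -> R)
    (P : S -> S -> R) (G : pred S) (n : nat) (s : S) (t : R) : R :=
  if s \in G then 1 else
  match n with
  | 0%N => 0
  | n'.+1 => \int[lebesgue_measure]_(x in `[0, t])
       (E s * expR (- (E s * x)) *
        \sum_(s' : S) P s s' * reach_within E P G n' s' (t - x))
  end.

Definition reach_prob (R : realType) (S : finType) (E : S -> R)
    (P : S -> S -> R) (s0 : S) (G : pred S) (t : R) : R :=
  limn (fun n => reach_within E P G n s0 t).

Definition scale_rates (R : realType) (S : finType) (c : R) (E : S -> R) : S -> R :=
  fun s => c * E s.

Definition Diff (R : realType) (S : finType) (E : S -> R) (P : S -> S -> R)
    (s0 g : S) (c t : R) : R :=
  `| reach_prob E P s0 (pred1 g) t - reach_prob (scale_rates c E) P s0 (pred1 g) t |.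

(* The Erlang CTMC E_N: states s_0,...,s_{N-1}, s_N = g, encoded as 'I_N.+1,
   with g = ord_max, initial state ord0 (= g when N = 0), all rates 1,
   P(s_i,s_{i+1}) = 1 for i < N and P(g,g) = 1. *)
Definition erlang_rate (R : realType) (N : nat) : 'I_N.+1 -> R := fun _ => 1.

Definition erlang_P (R : realType) (N : nat) : 'I_N.+1 -> 'I_N.+1 -> R :=
  fun i j => if i == ord_max then (j == ord_max)%:R
             else ((nat_of_ord j) == (nat_of_ord i).+1)%:R.

Definition Diff_erlang (R : realType) (N : nat) (c t : R) : R :=
  Diff (@erlang_rate R N) (@erlang_P R N) ord0 ord_max c t.

From HB Require Import structures.
From mathcomp Require Import all_boot all_order all_algebra.
From mathcomp Require Import all_classical all_reals all_analysis.
From mathcomp Require Import ring lra.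
Set Implicit Arguments.
Unset Strict Implicit.
Unset Printing Implicit Defensive.
Import Order.TTheory GRing.Theory Num.Theory.
Import numFieldNormedType.Exports.
Local Open Scope ring_scope.

(* With all exit rates equal to r, the time of the k-th jump is Erlang(k, r)
   distributed independently of the jump chain, so the probability of reaching
   the goal within t is sum_k h_k F_k(r t), where h_k is the probability that
   the jump chain first enters the goal at step k and F_k is the Erlang-k
   distribution function.  As sum_k h_k <= 1, Diff_t(M) is at most
   sup_k (F_k(c t) - F_k(t)).  This gap grows with k exactly as long as the
   Poisson weight e^(-t) t^k/k! exceeds e^(-c t) (c t)^k/k!, i.e. as long as
   k delta < (e^delta - 1) t, so it peaks at k = N; the Erlang chain E_N has
   h_k = [k = N] and attains the bound. *)

Section RealIntegrals.
Variable R : realType.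
Local Notation mu := (@lebesgue_measure R).

Lemma derivable_continuous (F : R -> R) :
  (forall x : R, derivable F x 1) -> continuous F.
Proof. by move=> dF x; apply/differentiable_continuous/derivable1_diffP. Qed.

Lemma Rintegral_FTC2 (f F : R -> R) (a b : R) : a <= b ->
  (forall x : R, is_derive x 1 F (f x)) -> continuous f ->
  \int[mu]_(x in `[a, b]) f x = F b - F a.
Proof.
rewrite le_eqVlt => /predU1P[<- _ _|ab dF cf].
  by rewrite set_itv1 Rintegral_set1 subrr.
have cF : continuous F by apply: derivable_continuous => x; case: (dF x).
rewrite /Rintegral (continuous_FTC2 (F := F) ab); first by rewrite -EFinB.
- exact: continuous_subspaceT.
- split; first by move=> x _; case: (dF x).
  + exact/cvg_at_right_filter/cF.
  + exact/cvg_at_left_filter/cF.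
- by move=> x _; rewrite derive1E derive_val.
Qed.

Lemma continuous_itv_integrable (f : R -> R) (a b : R) :
  continuous f -> mu.-integrable `[a, b] (EFin \o f).
Proof.
move=> cf; apply: continuous_compact_integrable; first exact: segment_compact.
exact: continuous_subspaceT.
Qed.

Lemma Rintegral_sum d (T : measurableType d) (nu : {measure set T -> \bar R})
    (D : set T) n (f : 'I_n -> T -> R) : measurable D ->
  (forall i, nu.-integrable D (EFin \o f i)) ->
  \int[nu]_(x in D) \sum_(i < n) f i x = \sum_(i < n) \int[nu]_(x in D) f i x.
Proof.
move=> mD intf; elim: n f intf => [|n IH] f intf.
  under eq_Rintegral do rewrite big_ord0.
  by rewrite Rintegral_cst // mul0r big_ord0.
under eq_Rintegral do rewrite big_ord_recr.
rewrite RintegralD // ?IH ?big_ord_recr //.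
have -> : EFin \o (fun x => \sum_(i < n) f (widen_ord (leqnSn n) i) x) =
    fun x => \sum_(i < n) (EFin \o f (widen_ord (leqnSn n) i)) x.
  by apply/funext => x; rewrite /= sumEFin.
exact: integrable_sum.
Qed.

End RealIntegrals.

Lemma le_peak (R : numDomainType) (d : nat -> R) (N : nat) :
  (forall k, (k < N)%N -> d k <= d k.+1) ->
  (forall k, (N <= k)%N -> d k.+1 <= d k) ->
  forall k, d k <= d N.
Proof.
move=> up down k; case: (leqP k N) => [kN|/ltnW Nk].
- apply: (@Order.NatMonotonyTheory.nondecn_inP _ _ [pred i | (i <= N)%N]);
    rewrite ?inE //.
  + move=> i j _; rewrite !inE => jN m /andP[_ /ltnW mj].
    exact: leq_trans mj jN.
  + by move=> i _; rewrite !inE; apply: up.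
- apply: (@Order.NatMonotonyTheory.nonincn_inP _ _ [pred i | (N <= i)%N]);
    rewrite ?inE //.
  + move=> i j Ni _ m; rewrite !inE => /andP[/ltnW im _].
    exact: leq_trans Ni im.
  + by move=> i Ni _; apply: down.
Qed.

Section ErlangDistribution.
Variable R : realType.
Local Notation mu := (@lebesgue_measure R).

Definition poisson (k : nat) (u : R) : R := expR (- u) * u ^+ k / k`!%:R.

Definition erlang_cdf (k : nat) (u : R) : R := 1 - \sum_(j < k) poisson j u.

Lemma erlang_cdf0 u : erlang_cdf 0 u = 1.
Proof. by rewrite /erlang_cdf big_ord0 subr0. Qed.

Lemma erlang_cdfS k u : erlang_cdf k.+1 u = erlang_cdf k u - poisson k u.
Proof. by rewrite /erlang_cdf big_ord_recr /= opprD addrA. Qed.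

Lemma poisson_ge0 k u : 0 <= u -> 0 <= poisson k u.
Proof. by move=> u0; rewrite !mulr_ge0 ?expR_ge0 ?exprn_ge0 ?invr_ge0. Qed.

Lemma erlang_cdf_le1 k u : 0 <= u -> erlang_cdf k u <= 1.
Proof.
by move=> u0; rewrite lerBlDr lerDl sumr_ge0 // => j _; apply: poisson_ge0.
Qed.

Global Instance is_derive_poisson k (x : R) :
  is_derive x 1 (poisson k)
    ((if k is k'.+1 then poisson k' x else 0) - poisson k x).
Proof.
have -> : poisson k = (expR \o -%R) * id ^+ k * cst (k`!%:R^-1).
  by apply/funext => u; rewrite /poisson !fctE.
apply: is_derive_eq; rewrite !fctE /= /GRing.scale /= /poisson.
case: k => [|k]; first by rewrite expr0 mul0r; ring.
have k0 : k`!%:R != 0 :> R by rewrite pnatr_eq0 -lt0n fact_gt0.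
rewrite factS natrM; field.
by rewrite k0 nat1r pnatr_eq0.
Qed.

Global Instance is_derive_erlang_cdf k (x : R) :
  is_derive x 1 (erlang_cdf k.+1) (poisson k x).
Proof.
elim: k => [|k IH].
  have -> : erlang_cdf 1 = cst 1 - poisson 0.
    by apply/funext => u; rewrite erlang_cdfS erlang_cdf0.
  by apply: is_derive_eq; rewrite !sub0r opprK.
have -> : erlang_cdf k.+2 = erlang_cdf k.+1 - poisson k.+1.
  by apply/funext => u; rewrite erlang_cdfS.
by apply: is_derive_eq; rewrite opprB addrC subrK.
Qed.

Lemma continuous_erlang_cdf k : continuous (erlang_cdf k).
Proof.
case: k => [|k].
  have -> : erlang_cdf 0 = cst 1 by apply/funext => u; rewrite erlang_cdf0.
  exact: cst_continuous.
by apply: derivable_continuous => x; apply: ex_derive.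
Qed.

Lemma erlang_cdf_ndecr k (u v : R) :
  0 <= u -> u <= v -> erlang_cdf k u <= erlang_cdf k v.
Proof.
case: k => [|k] u0 uv; first by rewrite !erlang_cdf0.
apply: (ger0_derive1_ndecr (a := u) (b := v)) => //.
- move=> x; rewrite in_itv /= derive1E derive_val => /andP[ux _].
  exact/poisson_ge0/ltW/(le_lt_trans u0).
- exact/continuous_subspaceT/continuous_erlang_cdf.
Qed.

Lemma erlang_cdfS_at0 k : erlang_cdf k.+1 0 = 0.
Proof.
elim: k => [|k IH]; rewrite erlang_cdfS /poisson.
  by rewrite erlang_cdf0 oppr0 expR0 !mul1r fact0 invr1 subrr.
by rewrite IH expr0n mulr0 mul0r subrr.
Qed.

Lemma erlang_cdf_ge0 k u : 0 <= u -> 0 <= erlang_cdf k u.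
Proof.
case: k => [|k] u0; first by rewrite erlang_cdf0.
by rewrite -(erlang_cdfS_at0 k) erlang_cdf_ndecr.
Qed.

Lemma continuous_exp_kernel (r t : R) (F : R -> R) : continuous F ->
  continuous (fun x => r * expR (- (r * x)) * F (r * (t - x))).
Proof.
move=> cF x.
have -> : (fun y => r * expR (- (r * y)) * F (r * (t - y))) =
    (cst r \* (expR \o (cst (- r) \* id))) \* (F \o (cst r \* (cst t - id))).
  by apply/funext => y; rewrite /= mulNr.
have cid : {for x, continuous (@id R)} by apply: cvg_id.
apply: continuousM.
  apply: continuousM; first exact: cst_continuous.
  apply: continuous_comp; last exact: continuous_expR.
  by apply: continuousM; first exact: cst_continuous.
apply: continuous_comp; last exact: cF.
apply: continuousM; first exact: cst_continuous.
by apply: continuousB; first exact: cst_continuous.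
Qed.

Lemma erlang_cdf_conv (r t : R) k : 0 <= t ->
  \int[mu]_(x in `[0, t]) (r * expR (- (r * x)) * erlang_cdf k (r * (t - x))) =
  erlang_cdf k.+1 (r * t).
Proof.
move=> t0.
(* H' is the integrand because (erlang_cdf k.+1)' = poisson k and
   erlang_cdf k = erlang_cdf k.+1 + poisson k. *)
pose H := - ((expR \o (- r) \*: id) * (erlang_cdf k.+1 \o r \*: (cst t - id))).
have dH (x : R) :
    is_derive x 1 H (r * expR (- (r * x)) * erlang_cdf k (r * (t - x))).
  apply: is_derive_eq; rewrite /H !fctE /= /GRing.scale /=.
  by rewrite mulNr erlang_cdfS; ring.
rewrite (Rintegral_FTC2 t0 dH (continuous_exp_kernel (@continuous_erlang_cdf k))).
rewrite /H !fctE /= subrr subr0 !scaler0 erlang_cdfS_at0 expR0 mulr0 mul1r.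
by rewrite oppr0 sub0r opprK.
Qed.

Lemma poissonB_scale (c t : R) k : poisson k t - poisson k (c * t) =
  t ^+ k / k`!%:R * (expR (- t) - c ^+ k * expR (- (c * t))).
Proof. by rewrite /poisson exprMn; ring. Qed.

Lemma poissonB_expR_ge0 (delta t : R) k : 0 <= t ->
  k%:R * delta <= (expR delta - 1) * t ->
  0 <= poisson k t - poisson k (expR delta * t).
Proof.
move=> t0 hk; rewrite poissonB_scale -expRM_natl -expRD.
by rewrite mulr_ge0 ?divr_ge0 ?exprn_ge0 // subr_ge0 ler_expR; lra.
Qed.

Lemma poissonB_expR_le0 (delta t : R) k : 0 <= t ->
  (expR delta - 1) * t <= k%:R * delta ->
  poisson k t - poisson k (expR delta * t) <= 0.
Proof.
move=> t0 hk; rewrite poissonB_scale -expRM_natl -expRD.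
by rewrite mulr_ge0_le0 ?divr_ge0 ?exprn_ge0 // subr_le0 ler_expR; lra.
Qed.

Lemma erlang_cdf_gap_le (delta t : R) (N k : nat) : 0 < delta -> 0 <= t ->
  N%:Z = Num.ceil ((expR delta - 1) * t / delta) ->
  erlang_cdf k (expR delta * t) - erlang_cdf k t <=
  erlang_cdf N (expR delta * t) - erlang_cdf N t.
Proof.
move=> d0 t0 hN.
pose gap k := erlang_cdf k (expR delta * t) - erlang_cdf k t.
have gapS j : gap j.+1 = gap j + (poisson j t - poisson j (expR delta * t)).
  by rewrite /gap !erlang_cdfS; ring.
apply: (le_peak (d := gap)) => j hj; rewrite gapS.
- rewrite lerDl poissonB_expR_ge0 // -ler_pdivlMr // ltW //.
  by rewrite pmulrn -ceil_gt_int -hN ltz_nat.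
- rewrite gerDl poissonB_expR_le0 // -ler_pdivrMr //.
  by rewrite (le_trans (ceil_ge _)) // -hN pmulrn ler_int lez_nat.
Qed.

End ErlangDistribution.

Section FirstPassage.
Variables (R : realType) (S : finType) (P : S -> S -> R) (G : pred S).

Fixpoint first_hit (k : nat) (s : S) : R :=
  match k with
  | 0 => (s \in G)%:R
  | k'.+1 => if s \in G then 0 else \sum_(s' : S) P s s' * first_hit k' s'
  end.

Hypothesis P_ge0 : forall s s', 0 <= P s s'.

Lemma first_hit_ge0 k s : 0 <= first_hit k s.
Proof.
elim: k s => [|k IH] s /=; first by case: (s \in G).
by case: (s \in G) => //; rewrite sumr_ge0 // => s' _; rewrite mulr_ge0.
Qed.

Lemma sum_first_hit_le1 : (forall s, \sum_(s' : S) P s s' = 1) ->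
  forall n s, \sum_(k < n) first_hit k s <= 1.
Proof.
move=> P1; elim=> [|n IH] s; first by rewrite big_ord0.
rewrite big_ord_recl /=; case: (boolP (s \in G)) => sG.
  by rewrite big1 ?addr0 // => i _; rewrite /= sG.
rewrite add0r.
under eq_bigr => i _ do rewrite add0n.
rewrite exchange_big /= -(P1 s) ler_sum // => s' _.
by rewrite -mulr_sumr ler_piMr.
Qed.

Lemma reach_within_uniform (E : S -> R) (r : R) : (forall s, E s = r) ->
  forall n s t, 0 <= t ->
  reach_within E P G n s t = \sum_(k < n.+1) first_hit k s * erlang_cdf k (r * t).
Proof.
move=> hE; elim=> [|n IH] s t t0.
  by rewrite /= big_ord1 /= erlang_cdf0 mulr1; case: (s \in G).
rewrite /= big_ord_recl; under eq_bigr => i _ do rewrite lift0.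
rewrite /= erlang_cdf0 mulr1.
case: (boolP (s \in G)) => sG.
  by rewrite big1 ?addr0 // => i _; rewrite mul0r.
rewrite add0r hE.
pose kernel k x := r * expR (- (r * x)) * erlang_cdf k (r * (t - x)).
have int_kernel k : lebesgue_measure.-integrable `[0, t] (EFin \o kernel k).
  exact/continuous_itv_integrable/continuous_exp_kernel/continuous_erlang_cdf.
transitivity (\int[lebesgue_measure]_(x in `[0, t])
    \sum_(k < n.+1) (\sum_(s' : S) P s s' * first_hit k s') * kernel k x).
  apply: eq_Rintegral => x; rewrite inE /= in_itv /= => /andP[_ xt].
  under eq_bigr => s' _ do rewrite IH ?subr_ge0 //.
  under [RHS]eq_bigr => k _ do rewrite mulr_suml.
  rewrite [RHS]exchange_big /= mulr_sumr; apply: eq_bigr => s' _.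
  rewrite mulr_sumr mulr_sumr; apply: eq_bigr => k _.
  by rewrite /kernel; ring.
rewrite Rintegral_sum //; last by move=> k; exact: integrableZl (int_kernel k).
by apply: eq_bigr => k _; rewrite RintegralZl // erlang_cdf_conv.
Qed.

Lemma reach_prob_uniform (E : S -> R) (r : R) s0 t :
  (forall s, E s = r) -> 0 <= t ->
  reach_prob E P s0 G t =
  limn (fun n => \sum_(k < n.+1) first_hit k s0 * erlang_cdf k (r * t)).
Proof.
move=> hE t0; rewrite /reach_prob; congr (limn _).
by apply/funext => n; rewrite (reach_within_uniform hE).
Qed.

End FirstPassage.

Section WeightedLimits.
Variables (R : realType) (h : nat -> R).
Hypotheses (h_ge0 : forall k, 0 <= h k)
  (h_sum_le1 : forall n, \sum_(k < n) h k <= 1).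

Lemma cvgn_weighted_sum (a : nat -> R) : (forall k, 0 <= a k <= 1) ->
  cvgn (fun n => \sum_(k < n.+1) h k * a k).
Proof.
move=> a01; apply: nondecreasing_is_cvgn.
  apply/nondecreasing_seqP => n; rewrite [leRHS]big_ord_recr /= lerDl.
  by rewrite mulr_ge0 //; case/andP: (a01 n.+1).
exists 1 => _ [n _ <-]; apply: le_trans (h_sum_le1 n.+1).
by apply: ler_sum => k _; rewrite ler_piMr //; case/andP: (a01 k).
Qed.

Lemma dist_limn_weighted_sum_le (a b : nat -> R) (M : R) :
  (forall k, 0 <= a k <= 1) -> (forall k, 0 <= b k <= 1) ->
  (forall k, `|a k - b k| <= M) ->
  `|limn (fun n => \sum_(k < n.+1) h k * a k) -
    limn (fun n => \sum_(k < n.+1) h k * b k)| <= M.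
Proof.
move=> a01 b01 abM.
have M0 : 0 <= M := le_trans (normr_ge0 _) (abM 0%N).
apply: (cvgr_to_le
  (cvg_norm (cvgB (cvgn_weighted_sum a01) (cvgn_weighted_sum b01)))).
apply: nearW => n /=.
rewrite fctE -sumrB (le_trans (ler_norm_sum _ _ _)) //.
apply: le_trans (_ : \sum_(k < n.+1) h k * M <= M).
  by apply: ler_sum => k _; rewrite -mulrBr normrM ger0_norm // ler_wpM2l.
by rewrite -mulr_suml ler_piMl.
Qed.

End WeightedLimits.

Lemma Diff_uniform_le (R : realType) (S : finType) (E : S -> R) (P : S -> S -> R)
    (s0 g : S) (c t M : R) :
  (forall s, E s = 1) -> (forall s s', 0 <= P s s') ->
  (forall s, \sum_(s' : S) P s s' = 1) -> 0 <= c -> 0 <= t ->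
  (forall k, `|erlang_cdf k t - erlang_cdf k (c * t)| <= M) ->
  Diff E P s0 g c t <= M.
Proof.
move=> hE P_ge0 P1 c0 t0 hM.
have hEc s : scale_rates c E s = c by rewrite /scale_rates hE mulr1.
rewrite /Diff (reach_prob_uniform _ _ _ hE t0) (reach_prob_uniform _ _ _ hEc t0).
rewrite mul1r.
have := dist_limn_weighted_sum_le (h := fun k => first_hit P (pred1 g) k s0) _ _
  (a := fun k => erlang_cdf k t) (b := fun k => erlang_cdf k (c * t)).
apply=> // [k|n|k|k].
- exact: first_hit_ge0.
- exact: sum_first_hit_le1.
- by rewrite erlang_cdf_ge0 ?erlang_cdf_le1.
- by rewrite erlang_cdf_ge0 ?erlang_cdf_le1 ?mulr_ge0.
Qed.

Section ErlangChain.
Variables (R : realType) (N : nat).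

Lemma first_hit_erlang k (i : 'I_N.+1) :
  first_hit (@erlang_P R N) (pred1 ord_max) k i = ((i + k)%N == N)%:R.
Proof.
elim: k i => [|k IH] i /=; first by rewrite addn0 inE -val_eqE.
rewrite inE; case: (eqVneq i ord_max) => [->|im] /=.
  by rewrite -[X in _ == X]addn0 eqn_add2l.
have iN : (i < N)%N.
  by rewrite ltn_neqAle -ltnS ltn_ord andbT; move: im; rewrite -val_eqE.
rewrite /erlang_P (negbTE im) (bigD1 (inord i.+1)) //= inordK ?ltnS // eqxx mul1r.
rewrite IH inordK ?ltnS // addSnnS big1 ?addr0 // => j jne.
rewrite (_ : (j == i.+1 :> nat) = false) ?mul0r //.
apply: contraNF jne => /eqP ji; apply/eqP/val_inj.
by rewrite /= inordK ?ltnS.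
Qed.

Lemma reach_prob_erlang (E : 'I_N.+1 -> R) (r t : R) :
  (forall s, E s = r) -> 0 <= t ->
  reach_prob E (@erlang_P R N) ord0 (pred1 ord_max) t = erlang_cdf N (r * t).
Proof.
move=> hE t0; apply: cvg_lim; first exact: Rhausdorff.
apply: cvg_near_cst; near=> n.
have Nn : (N <= n)%N by near: n; exact: nbhs_infty_ge.
rewrite (reach_within_uniform _ _ hE) //.
under eq_bigr => k _ do rewrite first_hit_erlang add0n.
rewrite (bigD1 (@Ordinal n.+1 N Nn)) //= eqxx mul1r big1 ?addr0 // => k kN.
rewrite (_ : (k == N :> nat) = false) ?mul0r //.
by apply: contraNF kN => /eqP kN; apply/eqP/val_inj.
Unshelve. all: by end_near.
Qed.

Lemma Diff_erlangE (c t : R) : 1 <= c -> 0 <= t ->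
  Diff_erlang N c t = erlang_cdf N (c * t) - erlang_cdf N t.
Proof.
move=> c1 t0.
have rate1 s : @erlang_rate R N s = 1 by [].
have ratec s : scale_rates c (@erlang_rate R N) s = c.
  by rewrite /scale_rates mulr1.
rewrite /Diff_erlang /Diff (reach_prob_erlang rate1 t0).
rewrite (reach_prob_erlang ratec t0) mul1r.
rewrite distrC ger0_norm // subr_ge0 erlang_cdf_ndecr // ler_peMl //.
Qed.

End ErlangChain.

Theorem proposition5 (R : realType) (S : finType) (E : S -> R)
    (P : S -> S -> R) (s0 g : S) (delta t : R) (N : nat) :
  (forall s, E s = 1) ->
  (forall s s', 0 <= P s s') ->
  (forall s, \sum_(s' : S) P s s' = 1) ->
  P g g = 1 ->
  0 < delta -> 0 <= t ->
  (N%:Z = Num.ceil ((expR delta - 1) * t / delta)) ->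
  Diff E P s0 g (expR delta) t <= Diff_erlang N (expR delta) t /\
  Diff_erlang N (expR delta) t =
    \sum_(0 <= k < N) (t ^+ k / (k`!)%:R *
                       (expR (- t) - expR delta ^+ k * expR (- (expR delta * t)))).
Proof.
move=> hE P_ge0 P1 _ d0 t0 hN.
have c1 : 1 <= expR delta by rewrite -expR0 ler_expR ltW.
rewrite Diff_erlangE //; split.
- apply: Diff_uniform_le => // k.
  rewrite distrC ger0_norm ?subr_ge0 ?erlang_cdf_ndecr ?ler_peMl //.
  exact: erlang_cdf_gap_le.
- rewrite /erlang_cdf big_mkord opprB addrC addrA subrK -sumrB.
  by apply: eq_bigr => k _; rewrite poissonB_scale.
Qed.
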